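(* Under the setting in the context, for every $\pi\in\Pi_\rho$, $$\sup_{r\in\mathcal U^{(1)}_\varepsilon}\Big[\sup_{\beta\in\Pi_\rho}J_r(\beta)-J_r(\pi)\Big]=\sup_{\beta\in\Pi_\rho}\Big\{J_{\hat r}(\beta)-J_{\hat r}(\pi)+\varepsilon\,C_{\infty,\mathrm{rel}}(\beta,\pi;\mu,\mathcal D)\Big\}.$$
   Context: Setting: prompts $x\sim\mathcal D$ on a space $\mathcal X$; a finite response set $\mathcal Y$; reward functions $r:\mathcal X\times\mathcal Y\to\mathbb R$ (measurable, with the expectations below finite), $r(x)\in\mathbb R^{\mathcal Y}$ the promptwise vector; $\hat r$ a fixed proxy reward. $\Pi_\rho$ is a nonempty set of policies (a local policy class); each $\pi\in\Pi_\rho$ has a bounded measurable linear representation $z_\pi(x)\in\mathbb R^{\mathcal Y}$ (e.g. $z_\pi(x)=\pi(\cdot\mid x)$) with $J_r(\pi)=\mathbb E_{x\sim\mathcal D}[\langle z_\pi(x),r(x)\rangle]$. For each $x$, $\mu_x$ is a probability distribution on $\mathcal Y$ with $\mu_x(y)>0$ for all $y$. Weighted norms: $\|e\|_{1,\mu_x}:=\sum_y\mu_x(y)|e(y)|$, $\|v\|_{\infty,\mu_x^{-1}}:=\max_y|v(y)|/\mu_x(y)$. For $\varepsilon>0$, $\mathcal U^{(1)}_\varepsilon:=\{r:\ \mathbb E_{x\sim\mathcal D}[\|r(x)-\hat r(x)\|_{1,\mu_x}]\le\varepsilon\}$. Relative integrated concentrability: $C_{\infty,\mathrm{rel}}(\beta,\pi;\mu,\mathcal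 D):=\operatorname{ess\,sup}_{x\sim\mathcal D}\|z_\beta(x)-z_\pi(x)\|_{\infty,\mu_x^{-1}}$. *)

From HB Require Import structures.
From mathcomp Require Import all_boot all_order all_algebra.
From mathcomp Require Import all_classical all_reals all_analysis.
From mathcomp Require Import ess_sup_inf.
Set Implicit Arguments. Unset Strict Implicit. Unset Printing Implicit Defensive.
Import Order.TTheory GRing.Theory Num.Def Num.Theory.
Import numFieldNormedType.Exports.
Local Open Scope classical_set_scope.
Local Open Scope ring_scope.

Section defs.
Context {d : measure_display} {X : measurableType d} {R : realType} {Y : finType}.

Definition inner (v w : Y -> R) : R := \sum_(y : Y) v y * w y.

Definition norm1w (m : Y -> R) (e : Y -> R) : R := \sum_(y : Y) m y * `|e y|.

(* ||v||_{oo,mu^{-1}} = max_y |v(y)| / mu(y)  (values are >= 0, so 0 is a neutral start) *)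
Definition norminfw (m : Y -> R) (v : Y -> R) : R :=
  \big[Num.max/0]_(y : Y) (`|v y| / m y).

Definition J (P : probability X R) (z : X -> Y -> R) (r : X -> Y -> R) : \bar R :=
  (\int[P]_x (inner (z x) (r x))%:E)%E.

Definition weight_family (mu : X -> Y -> R) : Prop :=
  (forall x y, 0 < mu x y) /\ (forall x, \sum_(y : Y) mu x y = 1) /\
  (forall y, measurable_fun [set: X] (fun x => mu x y)).

Definition policy_rep (z : X -> Y -> R) : Prop :=
  (exists M : R, forall x y, `|z x y| <= M) /\
  (forall y, measurable_fun [set: X] (fun x => z x y)).

Definition reward_fun (P : probability X R) (Pol : Type) (Pi : set Pol)
    (z : Pol -> X -> Y -> R) (mu : X -> Y -> R) (rhat r : X -> Y -> R) : Prop :=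
  (forall y, measurable_fun [set: X] (fun x => r x y)) /\
  (forall b, Pi b -> P.-integrable [set: X] (fun x => (inner (z b x) (r x))%:E)) /\
  P.-integrable [set: X] (fun x => (norm1w (mu x) (fun y => r x y - rhat x y))%:E).

Definition U1 (P : probability X R) (Pol : Type) (Pi : set Pol)
    (z : Pol -> X -> Y -> R) (mu : X -> Y -> R) (rhat : X -> Y -> R) (eps : R)
    : set (X -> Y -> R) :=
  [set r | reward_fun P Pi z mu rhat r /\
     (\int[P]_x (norm1w (mu x) (fun y => r x y - rhat x y))%:E <= eps%:E)%E].

Definition Crel (P : probability X R) (mu : X -> Y -> R) (zb zp : X -> Y -> R) : \bar R :=
  ess_sup P (fun x => (norminfw (mu x) (fun y => zb x y - zp x y))%:E).

End defs.

From HB Require Import structures.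
From mathcomp Require Import all_boot all_order all_algebra.
From mathcomp Require Import all_classical all_reals all_analysis.
From mathcomp Require Import ess_sup_inf measurable_realfun.
From mathcomp Require Import ring lra.
Set Implicit Arguments. Unset Strict Implicit. Unset Printing Implicit Defensive.
Import Order.TTheory GRing.Theory Num.Def Num.Theory.
Import numFieldNormedType.Exports.
Local Open Scope classical_set_scope.
Local Open Scope ring_scope.

(* Write r = rhat + e. The advantage of beta over pi under r is its advantage
   under rhat plus E <z_beta - z_pi, e>, and Hoelder's inequality for the dual
   pair of weighted norms bounds the latter by C_rel * E ||e||_{1,mu} <= eps C_rel.
   Conversely, for c < C_rel some coordinate y has |z_beta - z_pi|(y) > c mu(y),
   with a fixed sign and mu(y) bounded below, on a set A of positive measure;
   spending the whole budget on e = +-(eps / P(A)) 1_A / mu(y) at that coordinate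
   raises the advantage by at least eps c. *)

Section weighted_norms.
Variables (R : realType) (Y : finType).
Implicit Types (m v e : Y -> R).

Lemma norminfw_ge0 m v : 0 <= norminfw m v.
Proof. exact: bigmax_ge_id. Qed.

Lemma norm1w_ge0 m e : (forall y, 0 <= m y) -> 0 <= norm1w m e.
Proof. by move=> m_ge0; apply: sumr_ge0 => y _; rewrite mulr_ge0. Qed.

Lemma normr_inner_le m v e : (forall y, 0 < m y) ->
  `|inner v e| <= norminfw m v * norm1w m e.
Proof.
move=> m_gt0; rewrite /inner /norm1w mulr_sumr.
apply: (le_trans (ler_norm_sum _ _ _)); apply: ler_sum => y _.
have vy_le : `|v y| / m y <= norminfw m v.
  exact: (le_bigmax 0 (fun y => `|v y| / m y) y).
rewrite normrM mulrA -[`|v y|](divfK (lt0r_neq0 (m_gt0 y))).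
by rewrite ler_wpM2r // ler_wpM2r // ltW.
Qed.

Lemma innerDr v e e' : inner v (fun y => e y + e' y) = inner v e + inner v e'.
Proof. by rewrite /inner -big_split; apply: eq_bigr => y _; rewrite mulrDr. Qed.

Lemma inner_sub_split (a b r r' : Y -> R) :
  inner a r - inner b r =
  inner a r' - inner b r' + inner (fun y => a y - b y) (fun y => r y - r' y).
Proof.
rewrite /inner -!sumrB -big_split /=; apply: eq_bigr => y _.
by rewrite mulrBl !mulrBr; ring.
Qed.

Lemma inner_single v y0 (g : R) :
  inner v (fun y => if y == y0 then g else 0) = v y0 * g.
Proof.
rewrite /inner (bigD1 y0) //= eqxx big1 ?addr0 // => y /negbTE ->.
by rewrite mulr0.
Qed.

Lemma norm1w_single m y0 (g : R) :
  norm1w m (fun y => if y == y0 then g else 0) = m y0 * `|g|.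
Proof.
rewrite /norm1w (bigD1 y0) //= eqxx big1 ?addr0 // => y /negbTE ->.
by rewrite normr0 mulr0.
Qed.

(* The sign [s] and the bound [n] make the perturbation built from this
   witness measurable and bounded. *)
Lemma norminfw_gt_witness m v (c : R) : (forall y, 0 < m y) -> 0 <= c ->
  c < norminfw m v ->
  exists y (s : bool) (n : nat), c * m y < (-1) ^+ s * v y /\ n.+1%:R^-1 <= m y.
Proof.
move=> m_gt0 c_ge0; rewrite ltNge => /negP c_lt.
have [y] : exists y, ~ `|v y| / m y <= c.
  apply: contrapT => all_le; apply: c_lt; apply: bigmax_le => // y _.
  by apply: contrapT => y_gt; apply: all_le; exists y.
move/negP; rewrite -ltNge ltr_pdivlMr // normrEsign => cy.
have [n n_lt] := ltr_add_invr (m_gt0 y); rewrite add0r in n_lt.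
by exists y, (v y < 0), n; split => //; exact: ltW.
Qed.

End weighted_norms.

Lemma lee_ltEFin (R : realType) (x y : \bar R) :
  (forall t : R, (t%:E < x)%E -> (t%:E <= y)%E) -> (x <= y)%E.
Proof.
case: x => [a| |] le_y; last by rewrite leNye.
- case: y le_y => [b| |] le_y; rewrite ?leey //.
  + rewrite lee_fin; apply/ler_addgt0Pr => e e_gt0.
    by rewrite -lerBlDr -lee_fin le_y // lte_fin gtrBl.
  + by have := le_y (a - 1); rewrite lte_fin gtrBl ltr01 leeNy_eq => /(_ isT).
- case: y le_y => [b| |] le_y; rewrite ?leey //.
  + have := le_y (b + 1) (ltry _); rewrite lee_fin => ?; exfalso; lra.
  + by have := le_y 0 (ltry _); rewrite leeNy_eq.
Qed.

Lemma not_negligible_lt_ess_sup d (T : measurableType d) (R : realType)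
    (mu : {measure set T -> \bar R}) (f : T -> \bar R) (c : \bar R) :
  (c < ess_sup mu f)%E -> ~ mu.-negligible [set x | c < f x]%E.
Proof.
rewrite ltNge => /negP ess_gt f_gt; apply: ess_gt; apply/ess_supP.
by apply: negligibleS f_gt => x /= /negP; rewrite -ltNge.
Qed.

Lemma measurable_funV_gt0 d (T : measurableType d) (R : realType) (f : T -> R) :
  (forall x, 0 < f x) -> measurable_fun [set: T] f ->
  measurable_fun [set: T] (fun x => (f x)^-1).
Proof.
move=> f_gt0 mf; rewrite (_ : (fun x => _) = (fun x => f x `^ (-1))).
  exact: measurableT_comp (measurable_powR _) mf.
by apply/funext => x; rewrite powRN powRr1 // ltW.
Qed.

Section robust_regret.
Local Open Scope ereal_scope.
Variables (d : measure_display) (X : measurableType d) (R : realType) (Y : finType).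
Variables (P : probability X R) (Pol : Type) (Pi : set Pol).
Variables (z : Pol -> X -> Y -> R) (mu rhat : X -> Y -> R) (eps : R).
Hypothesis z_rep : forall b, Pi b -> policy_rep (z b).
Hypothesis mu_weights : weight_family mu.
Hypothesis rhat_reward : reward_fun P Pi z mu rhat rhat.
Hypothesis eps_gt0 : (0 < eps)%R.
Variables (pi : Pol) (Pi_pi : Pi pi).

Let mu_gt0 : forall x y, (0 < mu x y)%R := mu_weights.1.
Let mu_ge0 x y : (0 <= mu x y)%R := ltW (mu_gt0 x y).
Let measurable_mu : forall y, measurable_fun [set: X] (mu ^~ y) := mu_weights.2.2.

Local Notation reward := (reward_fun P Pi z mu rhat).
Local Notation U := (U1 P Pi z mu rhat eps).
Local Notation gap r b := (J P (z b) r - J P (z pi) r).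

Lemma integral_indic_mulr (A : set X) (t : R) : measurable A ->
  \int[P]_x (\1_A x * t)%:E = t%:E * P A.
Proof.
move=> mA; under eq_fun do rewrite EFinM muleC.
by rewrite integralZl ?integral_indic ?setIT //; exact: integrable_indic.
Qed.

Lemma integrable_indic_mulr (A : set X) (t : R) : measurable A ->
  P.-integrable [set: X] (fun x => (\1_A x * t)%:E).
Proof.
move=> mA; under eq_fun do rewrite EFinM muleC.
by apply: integrableZl => //; exact: integrable_indic.
Qed.

Definition advantage (r : X -> Y -> R) (b : Pol) (x : X) : R :=
  (inner (z b x) (r x) - inner (z pi x) (r x))%R.

Definition gain (r : X -> Y -> R) (b : Pol) (x : X) : R :=
  inner (fun y => z b x y - z pi x y)%R (fun y => r x y - rhat x y)%R.

Lemma gainE r b x : gain r b x = (advantage r b x - advantage rhat b x)%R.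
Proof. by rewrite /advantage (inner_sub_split _ _ _ (rhat x)) addrAC subrr add0r. Qed.

Lemma J_fin_num r b : reward r -> Pi b -> J P (z b) r \is a fin_num.
Proof. by move=> [_ [int_r _]] Pb; apply: integrable_fin_num => //; exact: int_r. Qed.

Lemma integrable_advantage r b : reward r -> Pi b ->
  P.-integrable [set: X] (EFin \o advantage r b).
Proof.
move=> [_ [int_r _]] Pb; rewrite /comp /advantage; under eq_fun do rewrite EFinB.
by apply: integrableB => //; exact: int_r.
Qed.

Lemma J_gapE r b : reward r -> Pi b -> gap r b = \int[P]_x (advantage r b x)%:E.
Proof.
by move=> [_ [int_r _]] Pb; rewrite /J -integralB_EFin //; exact: int_r.
Qed.

Lemma integrable_gain r b : reward r -> Pi b -> P.-integrable [set: X] (EFin \o gain r b).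
Proof.
move=> r_rew Pb; rewrite /comp; under eq_fun do rewrite gainE EFinB.
by apply: integrableB => //; exact: integrable_advantage.
Qed.

Lemma J_gap_split r b : reward r -> Pi b ->
  gap r b = gap rhat b + \int[P]_x (gain r b x)%:E.
Proof.
move=> r_rew Pb.
have int_gainE : \int[P]_x (gain r b x)%:E =
    \int[P]_x (advantage r b x)%:E - \int[P]_x (advantage rhat b x)%:E.
  rewrite -integralB_EFin //; try exact: integrable_advantage.
  by apply: eq_integral => x _; rewrite gainE EFinB.
rewrite int_gainE !J_gapE // [RHS]addeC subeK //.
by rewrite -J_gapE // fin_numB !J_fin_num.
Qed.

Lemma Crel_ge0 b : 0 <= Crel P mu (z b) (z pi).
Proof.
apply: ess_sup_ger => [|x]; last by rewrite lee_fin norminfw_ge0.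
by rewrite [X in _ < X]probability_setT lte01.
Qed.

Lemma int_gain_le r b : U r -> Pi b ->
  \int[P]_x (gain r b x)%:E <= eps%:E * Crel P mu (z b) (z pi).
Proof.
move=> [r_rew dist_le] Pb.
have := Crel_ge0 b.
case Crel_eq : Crel => [c| |] c_ge0; [|by rewrite gt0_muley ?lte_fin // leey|by []].
rewrite lee_fin in c_ge0.
have ae_le : \forall x \ae P,
    (norminfw (mu x) (fun y => z b x y - z pi x y)%R)%:E <= c%:E.
  by apply/ess_supP; rewrite -Crel_eq.
have [_ [_ int_dist]] := r_rew.
have m_gain := measurable_int _ (integrable_gain r_rew Pb).
apply: le_trans (lee_abs _) _; apply: le_trans (le_abse_integral _ _ m_gain) _ => //.
apply: (@le_trans _ _
    (\int[P]_x (c * norm1w (mu x) (fun y => r x y - rhat x y))%:E)).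
  apply: ae_ge0_le_integral => //.
  - exact: measurable_int _ (integrable_abse (integrable_gain r_rew Pb)).
  - by move=> x _; rewrite lee_fin mulr_ge0 // (norm1w_ge0 _ (mu_ge0 x)).
  - exact/measurable_EFinP/measurable_funM/measurable_EFinP/(measurable_int _ int_dist).
  apply: filterS ae_le => x norm_le _.
  rewrite abse_EFin lee_fin (le_trans (normr_inner_le _ _ (mu_gt0 x))) //.
  by rewrite ler_wpM2r // (norm1w_ge0 _ (mu_ge0 x)).
under eq_fun do rewrite EFinM.
rewrite ge0_integralZl_EFin //.
- by rewrite [leRHS]muleC lee_wpmul2l.
- by move=> x _; rewrite lee_fin (norm1w_ge0 _ (mu_ge0 x)).
- exact: measurable_int _ int_dist.
Qed.

Lemma J_gap_le r b : U r -> Pi b ->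
  gap r b <= gap rhat b + eps%:E * Crel P mu (z b) (z pi).
Proof.
move=> Ur Pb; rewrite J_gap_split //; last by case: Ur.
by rewrite leeD2l // int_gain_le.
Qed.

Lemma U1_rhat : U rhat.
Proof.
split => //; rewrite (_ : (fun x => _) = cst 0) ?integral0 ?lee_fin ?ltW //.
by apply/funext => x; rewrite /norm1w big1 // => y _; rewrite subrr normr0 mulr0.
Qed.

Definition robust_regret : \bar R :=
  ereal_sup [set ereal_sup [set J P (z b) r | b in Pi] - J P (z pi) r | r in U].

Lemma gap_le_robust_regret r b : U r -> Pi b -> gap r b <= robust_regret.
Proof.
move=> Ur Pb.
have J_le : J P (z b) r <= ereal_sup [set J P (z b') r | b' in Pi].
  by apply: ereal_sup_ubound; exists b.
apply: le_trans (leeD2r _ J_le) _.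
by apply: ereal_sup_ubound; exists r.
Qed.

Lemma robust_regret_le :
  robust_regret <= ereal_sup [set gap rhat b + eps%:E * Crel P mu (z b) (z pi) | b in Pi].
Proof.
apply: ge_ereal_sup => _ [r Ur <-].
have J_pi_fin : J P (z pi) r \is a fin_num by apply: J_fin_num => //; case: Ur.
rewrite leeBlDr //; apply: ge_ereal_sup => _ [b Pb <-].
rewrite -leeBlDr //; apply: le_trans (J_gap_le Ur Pb) _.
by apply: ereal_sup_ubound; exists b.
Qed.

Definition sign_set b (c : R) y (s : bool) (n : nat) : set X :=
  [set x | (c * mu x y < (-1) ^+ s * (z b x y - z pi x y))
           && (n.+1%:R^-1 <= mu x y)]%R.

Lemma measurable_sign_set b c y s n : Pi b -> measurable (sign_set b c y s n).
Proof.
move=> Pb; have [_ mzb] := z_rep Pb; have [_ mzpi] := z_rep Pi_pi.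
have mf : measurable_fun [set: X] (fun x => (c * mu x y < (-1) ^+ s * (z b x y - z pi x y))
                                            && (n.+1%:R^-1 <= mu x y))%R.
  apply: measurable_and; [apply: measurable_fun_ltr | apply: measurable_fun_ler] => //.
  - exact: measurable_funM.
  - by apply: measurable_funM => //; exact: measurable_funB.
by have := mf measurableT [set true] I; rewrite setTI.
Qed.

Lemma exists_sign_set b c : Pi b -> (0 <= c)%R -> c%:E < Crel P mu (z b) (z pi) ->
  exists y s n, P (sign_set b c y s n) != 0.
Proof.
move=> Pb c_ge0 /not_negligible_lt_ess_sup; apply: contra_notP => none.
have null y s n : P (sign_set b c y s n) = 0.
  by apply/eqP/negPn/negP => P_neq0; apply: none; exists y, s, n.
apply: (@negligibleS _ _ _ _
  (\bigcup_n \big[setU/set0]_(p : Y * bool) sign_set b c p.1 p.2 n)); last first.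
  apply: negligible_bigcup => n.
  elim/big_ind: _ => [|A B|[y s] _]; [exact: negligible_set0|exact: negligibleU|].
  by exists (sign_set b c y s n); split; [exact: measurable_sign_set|exact: null|].
move=> x; rewrite /= lte_fin => /(norminfw_gt_witness (mu_gt0 x) c_ge0).
move=> [y [s [n [c_lt n_le]]]]; exists n => //.
by rewrite (bigD1 (y, s)) //=; left; apply/andP.
Qed.

Definition bump (A : set X) (y0 : Y) (s : bool) (k : R) (x : X) (y : Y) : R :=
  if y == y0 then (\1_A x * ((-1) ^+ s * k) / mu x y0)%R else 0%R.

Definition bumped A y0 s k (x : X) (y : Y) : R := (rhat x y + bump A y0 s k x y)%R.

Lemma bumpedB A y0 s k x : (fun y => bumped A y0 s k x y - rhat x y)%R = bump A y0 s k x.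
Proof. by apply/funext => y; rewrite /bumped addrC addKr. Qed.

Lemma norm1w_bump A y0 s k x : (0 <= k)%R ->
  norm1w (mu x) (bump A y0 s k x) = (\1_A x * k)%R.
Proof.
move=> k_ge0; rewrite norm1w_single indicE; case: (x \in A); last first.
  by rewrite !mul0r normr0 mulr0.
rewrite !mul1r !normrM normr_sign mul1r normfV ger0_norm // gtr0_norm //.
by rewrite mulrCA mulfV ?mulr1 // lt0r_neq0.
Qed.

Lemma measurable_bump A y0 s k y : measurable A ->
  measurable_fun [set: X] (fun x => bump A y0 s k x y).
Proof.
move=> mA; rewrite /bump; case: (y == y0); last exact: measurable_cst.
apply: measurable_funM; last exact: measurable_funV_gt0.
by apply: measurable_funM => //; exact: measurable_indic.
Qed.

Lemma normr_bump_le A y0 s k n x : (0 <= k)%R ->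
  A `<=` [set x | n.+1%:R^-1 <= mu x y0]%R -> (`|bump A y0 s k x y0| <= k * n.+1%:R)%R.
Proof.
move=> k_ge0 A_mu; rewrite /bump eqxx indicE.
case: (boolP (x \in A)) => [/set_mem/A_mu /= mu_ge|_]; last first.
  by rewrite !mul0r normr0 mulr_ge0.
rewrite mul1r !normrM normr_sign mul1r normfV ger0_norm // gtr0_norm //.
by rewrite ler_wpM2l // -[n.+1%:R]invrK lef_pV2 ?posrE ?invr_gt0.
Qed.

Lemma bumped_in_U1 A y0 s k n : measurable A ->
  A `<=` [set x | n.+1%:R^-1 <= mu x y0]%R -> (0 <= k)%R -> (k%:E * P A <= eps%:E) ->
  U (bumped A y0 s k).
Proof.
move=> mA A_mu k_ge0 kPA_le.
have normE : (fun x => (norm1w (mu x) (fun y => bumped A y0 s k x y - rhat x y))%:E) =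
    (fun x => (\1_A x * k)%:E).
  by apply/funext => x; rewrite bumpedB norm1w_bump.
split; last by rewrite normE integral_indic_mulr.
have [m_rhat [int_rhat _]] := rhat_reward.
split; [|split; last by rewrite normE; exact: integrable_indic_mulr].
  by move=> y; apply: measurable_funD => //; exact: measurable_bump.
move=> b Pb; have [[M z_le] mz] := z_rep Pb.
rewrite (_ : (fun x => _) = (fun x => (inner (z b x) (rhat x))%:E +
                                      (z b x y0 * bump A y0 s k x y0)%:E)); last first.
  by apply/funext => x; rewrite -EFinD innerDr /bump inner_single eqxx.
apply: integrableD => //; first exact: int_rhat.
apply: (@le_integrable _ _ _ _ _ measurableT _ (EFin \o cst (M * (k * n.+1%:R)))%R).
- by apply/measurable_EFinP/measurable_funM => //; exact: measurable_bump.
- move=> x _; rewrite /= !lee_fin (le_trans _ (ler_norm _)) // normrM.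
  by rewrite ler_pM // (normr_bump_le _ _ k_ge0 A_mu).
- exact: finite_measure_integrable_cst.
Qed.

Lemma gain_bumped b A y0 s k x : gain (bumped A y0 s k) b x =
  (\1_A x * k * ((-1) ^+ s * (z b x y0 - z pi x y0) / mu x y0))%R.
Proof. by rewrite /gain bumpedB inner_single; ring. Qed.

Lemma gap_add_le_robust_regret b c : Pi b -> (0 <= c)%R ->
  c%:E < Crel P mu (z b) (z pi) -> gap rhat b + (eps * c)%:E <= robust_regret.
Proof.
move=> Pb c_ge0 c_lt.
have [y0 [s [n PA_neq0]]] := exists_sign_set Pb c_ge0 c_lt.
set A := sign_set b c y0 s n in PA_neq0.
have mA : measurable A by exact: measurable_sign_set.
have A_mu : A `<=` [set x | n.+1%:R^-1 <= mu x y0]%R by move=> x /andP[].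
have PA : P A = (fine (P A))%:E by rewrite fineK // fin_num_measure.
set a := fine (P A) in PA.
have a_gt0 : (0 < a)%R by rewrite -lte_fin -PA lt0e PA_neq0 measure_ge0.
pose k := (eps / a)%R.
have k_ge0 : (0 <= k)%R by rewrite divr_ge0 // ltW.
have U_bumped : U (bumped A y0 s k).
  apply: (@bumped_in_U1 A y0 s k n mA A_mu k_ge0).
  by rewrite PA -EFinM /k divfK // gt_eqF.
apply: le_trans (gap_le_robust_regret U_bumped Pb).
have [bumped_rew _] := U_bumped.
rewrite [leRHS]J_gap_split //.
rewrite leeD2l // (_ : (eps * c)%:E = \int[P]_x (\1_A x * (k * c))%:E); last first.
  by rewrite integral_indic_mulr // PA -EFinM /k mulrAC divfK // gt_eqF.
apply: le_integral => //; [exact: integrable_indic_mulr|exact: integrable_gain bumped_rew Pb|].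
move=> x _; rewrite lee_fin gain_bumped indicE.
case: (boolP (x \in A)) => [/set_mem /andP[cs_lt _]|_]; last by rewrite !mul0r.
by rewrite !mul1r ler_wpM2l // ler_pdivlMr // ltW.
Qed.

Lemma le_robust_regret b : Pi b ->
  gap rhat b + eps%:E * Crel P mu (z b) (z pi) <= robust_regret.
Proof.
move=> Pb; have gap_fin : gap rhat b \is a fin_num by rewrite fin_numB !J_fin_num.
rewrite -leeBrDl //; apply: lee_ltEFin => t t_lt; rewrite leeBrDl //.
have [t_lt0|t_ge0] := ltP t 0%R.
  apply: le_trans (gap_le_robust_regret U1_rhat Pb).
  by rewrite -[leRHS]adde0 leeD2l // lee_fin ltW.
have c_lt : (t / eps)%:E < Crel P mu (z b) (z pi).
  move: t_lt; case: Crel => [C| |].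
  - by rewrite -EFinM !lte_fin ltr_pdivrMr // mulrC.
  - by rewrite ltry.
  - by rewrite gt0_muleNy ?lte_fin.
have := gap_add_le_robust_regret Pb (divr_ge0 t_ge0 (ltW eps_gt0)) c_lt.
by rewrite mulrC divfK // gt_eqF.
Qed.

Lemma robust_regretE :
  robust_regret = ereal_sup [set gap rhat b + eps%:E * Crel P mu (z b) (z pi) | b in Pi].
Proof.
apply/le_anti/andP; split; first exact: robust_regret_le.
by apply: ge_ereal_sup => _ [b Pb <-]; exact: le_robust_regret.
Qed.

End robust_regret.

Theorem mainTheorem15 (d : measure_display) (X : measurableType d) (R : realType)
  (Y : finType) (P : probability X R) (Pol : Type) (Pi : set Pol)
  (z : Pol -> X -> Y -> R) (mu : X -> Y -> R) (rhat : X -> Y -> R) (eps : R) :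
  Pi !=set0 ->
  (forall b, Pi b -> policy_rep (z b)) ->
  weight_family mu ->
  reward_fun P Pi z mu rhat rhat ->
  0 < eps ->
  forall pi, Pi pi ->
  (ereal_sup [set (ereal_sup [set J P (z b) r | b in Pi] - J P (z pi) r)%E
              | r in U1 P Pi z mu rhat eps]
   = ereal_sup [set (J P (z b) rhat - J P (z pi) rhat + eps%:E * Crel P mu (z b) (z pi))%E
              | b in Pi])%E.
Proof.
(* nonemptiness of [Pi] already follows from [Pi pi] *)
move=> _ z_rep mu_weights rhat_reward eps_gt0 pi Pi_pi.
exact: robust_regretE.
Qed.
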